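(* There is an absolute constant $C>0$ such that the following holds. Let $B$ be a set of $n\ge 2$ natural numbers and let $B.B=\{bb' : b,b'\in B\}$. If $B.B$ contains an arithmetic progression $\{a, a+d, \ldots, a+(N-1)d\}$ with nonzero common difference $d$ and $N$ terms, then $N\le C\, n\log n$. *)

From Stdlib Require Import Reals ZArith List.
Open Scope R_scope.

Definition in_prodset (B : list nat) (x : Z) : Prop :=
  exists b b', In b B /\ In b' B /\ x = Z.of_nat (b * b').

(* Divide the progression by g = gcd(a, d) and look at its last M terms
   y_l, with M about N / 2^141, so that they lie between y_0 >= N - M and
   2 y_0, and each g y_l is a product of two elements of B.  If the largest
   prime factor of y_l is at least M, it divides no other y_l'.  The matrix of
   valuations v_(q_j)(g y_l) at these private primes factors through the
   n-column matrix of valuations of the elements of B and has full rank, so at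
   most n + 1 terms have a private prime.  The other terms are M-smooth, and a
   Legendre-type count bounds their product by M! (2 y_0)^pi(M).  Hence
   y_0 ^ (M - n - 1) <= M^M (2 y_0)^pi(M); with Chebyshev's bound
   pi(M) log M = O(M) and log y_0 >> log M this forces M = O(n log M), and
   N <= n^2 gives N = O(n log n). *)

From Stdlib Require Import Reals ZArith List Lra Lia Psatz.
From mathcomp Require all_boot all_algebra zify.
Open Scope R_scope.

Definition nat_ap_in_prodset (B : list nat) (a d N : nat) : Prop :=
  forall k, (k < N)%nat -> exists b b', In b B /\ In b' B /\ (a + k * d = b * b')%nat.

Module ProgressionTerms.
Import all_boot all_algebra zify.
Set Implicit Arguments. Unset Strict Implicit. Unset Printing Implicit Defensive.
Import GRing.Theory Num.Theory.
Local Open Scope ring_scope.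

(** * Private primes and a rank bound *)

Lemma sum_mul_delta (R : pzRingType) s (a : 'I_s -> R) (k : 'I_s) :
  \sum_l a l * (l == k)%:R = a k.
Proof.
rewrite (bigD1 k) //= eqxx mulr1 big1 ?addr0 // => l /negbTE ->.
by rewrite mulr0.
Qed.

(* Subtracting column [l0] from the columns [kap j] turns [W] into an
   invertible diagonal matrix. *)
Lemma rank_separated_rows (K : fieldType) m s (W : 'M[K]_(m, s))
    (kap : 'I_m -> 'I_s) (l0 : 'I_s) :
  (forall i j, i != j -> W j (kap i) = W j l0) ->
  (forall j, W j (kap j) != W j l0) -> \rank W = m.
Proof.
move=> off_diag on_diag.
pose D : 'M[K]_(s, m) := \matrix_(l, i) ((l == kap i)%:R - (l == l0)%:R).
have WD_diag : W *m D = diag_mx (\row_j (W j (kap j) - W j l0)).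
  apply/matrixP => j i; rewrite !mxE.
  under eq_bigr => l _ do rewrite mxE mulrBr.
  rewrite sumrB !sum_mul_delta.
  by case: (eqVneq i j) => [->|ne]; rewrite ?mulr1n // mulr0n off_diag ?subrr.
have WD_unit : W *m D \in unitmx.
  rewrite WD_diag unitmxE det_diag unitfE; apply/prodf_neq0 => j _.
  by rewrite mxE subr_eq0.
apply/eqP; rewrite eqn_leq rank_leq_row -{1}(mxrank_unit WD_unit).
exact: mxrankM_maxl.
Qed.

(* The [q]-adic valuations of the [g * y l], [q] ranging over the private
   primes, factor through the [n]-dimensional valuation vectors of [B], since
   [g * y l] is a product of two elements of [B]. *)
Lemma card_private_prime_terms_le (B : seq nat) M g (y : 'I_M -> nat)
    (P : pred 'I_M) (q : 'I_M -> nat) :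
  (0 < g)%N -> (forall l, 0 < y l)%N -> (forall b, b \in B -> 0 < b)%N ->
  (forall l, exists ij : 'I_(size B) * 'I_(size B),
      g * y l == nth 0 B ij.1 * nth 0 B ij.2)%N ->
  (forall l, P l -> [/\ prime (q l), q l %| y l
                      & forall l', l' != l -> ~~ (q l %| y l')])%N ->
  (#|P| <= (size B).+1)%N.
Proof.
move=> g_gt0 y_gt0 B_gt0 y_prod private.
case: M y P q y_prod private y_gt0 => [|M] y P q y_prod private y_gt0.
  by rewrite (leq_trans (max_card _)) ?card_ord.
pose l0 : 'I_M.+1 := ord0; pose K := [set l | P l & l != l0].
have P_K : (#|P| <= #|K|.+1)%N.
  rewrite (cardD1 l0 P) -[#|K|.+1]add1n leq_add ?leq_b1 //.
  by apply/subset_leq_card/subsetP => l; rewrite !inE andbC.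
apply: (leq_trans P_K); rewrite ltnS.
pose kap : 'I_#|K| -> 'I_M.+1 := enum_val (A := K).
have kapK j : P (kap j) /\ kap j != l0 by have := enum_valP j; rewrite inE => /andP.
pose ij l := xchoose (y_prod l).
have ij_prod l : (g * y l = nth 0 B (ij l).1 * nth 0 B (ij l).2)%N.
  exact/eqP/(xchooseP (y_prod l)).
pose F : 'M[rat]_(#|K|, size B) := \matrix_(j, i) (logn (q (kap j)) (nth 0 B i))%:R.
pose E : 'M[rat]_(size B, M.+1) :=
  \matrix_(i, l) ((i == (ij l).1)%:R + (i == (ij l).2)%:R).
have FE j l : (F *m E) j l = (logn (q (kap j)) g + logn (q (kap j)) (y l))%:R.
  rewrite mxE; under eq_bigr => i _ do rewrite [X in _ * X]mxE mulrDr.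
  rewrite big_split /= !sum_mul_delta !mxE -natrD -lognM ?B_gt0 ?mem_nth //.
  by rewrite -ij_prod lognM.
have not_dvd j l : l != kap j -> logn (q (kap j)) (y l) = 0%N.
  have [_ _ not_dvd] := private _ (proj1 (kapK j)).
  by move=> /not_dvd; rewrite lognE => /negbTE ->; rewrite !andbF.
have l0_kap j : l0 != kap j by rewrite eq_sym (proj2 (kapK j)).
have off_diag i j : i != j -> (F *m E) j (kap i) = (F *m E) j l0.
  move=> ne; rewrite !FE !not_dvd //.
  by apply: contra ne => /eqP /enum_val_inj ->.
have on_diag j : (F *m E) j (kap j) != (F *m E) j l0.
  rewrite !FE (not_dvd j l0) // addn0 eqr_nat -{2}[logn _ g]addn0 eqn_add2l -lt0n.
  have [q_prime q_dvd _] := private _ (proj1 (kapK j)).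
  by rewrite logn_gt0 mem_primes q_prime y_gt0.
rewrite -(rank_separated_rows off_diag on_diag).
exact: leq_trans (mxrankM_maxl F E) (rank_leq_col F).
Qed.

Local Open Scope nat_scope.

(** * Smooth terms of an arithmetic progression *)

Lemma dvd_ap_terms_eqmod Q a c d l l' : coprime Q d ->
  Q %| a + (c + l) * d -> Q %| a + (c + l') * d -> l = l' %[mod Q].
Proof.
move=> co_Qd dvd_l dvd_l'.
wlog le_ll' : l l' dvd_l dvd_l' / l <= l'.
  move=> sym; have [le | /ltnW le] := leqP l l'; first exact: sym.
  by apply: esym; apply: sym.
have : Q %| (a + (c + l') * d) - (a + (c + l) * d) by apply: dvdn_sub.
rewrite subnDl -mulnBl subnDl Gauss_dvdl // => dvd_diff.
by apply/eqP; rewrite eq_sym eqn_mod_dvd.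
Qed.

Lemma prime_dvd_ap_coprime q a c d l : coprime a d -> prime q ->
  q %| a + (c + l) * d -> coprime q d.
Proof.
move=> co_ad q_prime dvd_q; rewrite prime_coprime //; apply/negP => dvd_qd.
have dvd_qa : q %| a by move: dvd_q; rewrite dvdn_addl // dvdn_mull.
have : q %| gcdn a d by rewrite dvdn_gcd dvd_qa dvd_qd.
by rewrite (eqP co_ad) dvdn1 => /eqP q1; rewrite q1 in q_prime.
Qed.

Lemma count_dvd_ap_le Q a c d M : 0 < Q -> coprime Q d ->
  \sum_(l < M) (Q %| a + (c + l) * d) <= M %/ Q + 1.
Proof.
move=> Q_gt0 co_Qd; case: M => [|M]; first by rewrite big_ord0.
rewrite -big_mkcondr sum1_card /=.
set A := [pred l : 'I_M.+1 | Q %| a + (c + l) * d].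
pose s := [seq val l %/ Q | l <- enum A].
have s_uniq : uniq s.
  rewrite map_inj_in_uniq ?enum_uniq // => l l'.
  rewrite !mem_enum !inE => dvd_l dvd_l' eq_div; apply: val_inj => /=.
  rewrite (divn_eq l Q) (divn_eq l' Q) eq_div.
  by rewrite (dvd_ap_terms_eqmod co_Qd dvd_l dvd_l').
have s_sub : {subset s <= iota 0 (M %/ Q).+1}.
  move=> v /mapP [l _ ->]; rewrite mem_iota add0n /= ltnS.
  by apply: leq_div2r; rewrite -ltnS.
rewrite cardE -(size_map (fun l : 'I_M.+1 => val l %/ Q)).
apply: leq_trans (uniq_leq_size s_uniq s_sub) _.
by rewrite size_iota addn1 ltnS leq_div2r.
Qed.

Lemma logn_count_dvd_upto p y Y : prime p -> 0 < y -> y <= Y ->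
  logn p y = \sum_(1 <= j < Y) (p ^ j %| y).
Proof.
move=> p_prime y_gt0 le_yY.
rewrite logn_count_dvd // [RHS](big_cat_nat _ (n := y)) //=.
rewrite [X in _ = _ + X]big1_seq ?addn0 // => j /andP[_].
rewrite mem_index_iota => /andP[le_yj _]; apply/eqP; rewrite eqb0.
apply/negP => /(dvdn_leq y_gt0); rewrite leqNgt.
by rewrite (leq_ltn_trans le_yj) // ltn_expl // prime_gt1.
Qed.

Lemma sum_divn_expn_le_logn_fact p M R : prime p ->
  \sum_(1 <= j < R) M %/ p ^ j <= logn p M`!.
Proof.
move=> p_prime; rewrite logn_fact //.
have [le_RM | lt_MR] := leqP R M.+1.
  have [le_R1 | lt_1R] := leqP R 1; first by rewrite big_geq.
  rewrite [X in _ <= X](big_cat_nat _ (n := R)) //=; [exact: leq_addr | exact: ltnW].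
rewrite (big_cat_nat _ (n := M.+1)) //=; last exact: ltnW.
rewrite [X in _ + X <= _]big1_seq ?addn0 // => j /andP[_].
rewrite mem_index_iota => /andP[lt_Mj _]; apply: divn_small.
by apply: leq_trans lt_Mj _; apply/ltnW/ltn_expl/prime_gt1.
Qed.

Lemma count_expn_le_trunc_log p Y R : 1 < p ->
  \sum_(1 <= j < R) (p ^ j <= Y) <= trunc_log p Y.
Proof.
move=> p_gt1; set t := trunc_log p Y.
have count_le_t R' : \sum_(1 <= j < R') (j <= t) = minn R'.-1 t.
  elim: R' => [|[|R'] IH]; [by rewrite big_geq ?min0n | by rewrite big_geq ?min0n |].
  by rewrite big_nat_recr //= IH /= !minnE; case: (leqP R'.+1 t); lia.
apply: (@leq_trans (\sum_(1 <= j < R) (j <= t))); last first.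
  by rewrite count_le_t geq_minr.
by apply: leq_sum => j _; case: (boolP (p ^ j <= Y)) => // /(trunc_log_max p_gt1) ->.
Qed.

Lemma logn_prod I (r : seq I) (P : pred I) (F : I -> nat) p :
  (forall i, 0 < F i) ->
  logn p (\prod_(i <- r | P i) F i) = \sum_(i <- r | P i) logn p (F i).
Proof.
move=> F_gt0; suff [] : 0 < \prod_(i <- r | P i) F i /\
   logn p (\prod_(i <- r | P i) F i) = \sum_(i <- r | P i) logn p (F i) by [].
elim/big_rec2: _ => [|i m1 m2 _ [m1_gt0 <-]]; first by rewrite logn1.
by rewrite muln_gt0 F_gt0 m1_gt0 lognM.
Qed.

Definition prime_count M := #|[pred q : 'I_M | prime q]|.

Section ArithmeticProgression.

Variables (M Y a c d : nat).
Hypothesis co_ad : coprime a d.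
Let y (l : 'I_M) := a + (c + l) * d.
Hypothesis y_bounds : forall l, 0 < y l <= Y.

(* A prime dividing [d] divides no term, since [a] and [d] are coprime. *)
Lemma count_expn_dvd_ap_le p j : prime p -> 0 < j ->
  \sum_(l < M) (p ^ j %| y l) <= M %/ p ^ j + (p ^ j <= Y).
Proof.
move=> p_prime j_gt0.
have [co_pd | ] := boolP (coprime p d).
  have [le_pjY | lt_Ypj] := leqP (p ^ j) Y.
    by apply: count_dvd_ap_le; rewrite ?expn_gt0 ?prime_gt0 ?coprimeXl.
  rewrite big1 // => l _; apply/eqP; rewrite eqb0; apply/negP.
  have /andP[y_gt0 le_yY] := y_bounds l.
  by move=> /(dvdn_leq y_gt0)/leq_trans/(_ le_yY); rewrite leqNgt lt_Ypj.
move=> not_co_pd; rewrite big1 // => l _; apply/eqP; rewrite eqb0.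
apply: contra not_co_pd => dvd_pj; apply: (prime_dvd_ap_coprime co_ad p_prime).
by apply: dvdn_trans dvd_pj; rewrite -(prednK j_gt0) expnS dvdn_mulr.
Qed.

Lemma sum_logn_ap_le p : prime p ->
  \sum_(l < M) logn p (y l) <= logn p M`! + trunc_log p Y.
Proof.
move=> p_prime.
under eq_bigr => l _.
  have /andP[y_gt0 le_yY] := y_bounds l.
  rewrite (logn_count_dvd_upto p_prime y_gt0 (leqW le_yY)); over.
rewrite exchange_big /=.
apply: (@leq_trans (\sum_(1 <= j < Y.+1) (M %/ p ^ j + (p ^ j <= Y)))).
  rewrite big_nat_cond [X in _ <= X]big_nat_cond.
  by apply: leq_sum => j /andP[/andP[j_gt0 _] _]; apply: count_expn_dvd_ap_le.
rewrite big_split leq_add ?sum_divn_expn_le_logn_fact //.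
by rewrite count_expn_le_trunc_log ?prime_gt1.
Qed.

(* The product divides [M`! * \prod_(q < M prime) q ^ trunc_log q Y],
   valuation by valuation. *)
Lemma prod_smooth_ap_le (S : pred 'I_M) : 0 < Y ->
  (forall l, S l -> max_pdiv (y l) < M) ->
  \prod_(l | S l) y l <= M`! * Y ^ prime_count M.
Proof.
move=> Y_gt0 smooth.
have y_gt0 l : 0 < y l by case/andP: (y_bounds l).
pose W := \prod_(q < M | prime q) q ^ trunc_log q Y.
have W_gt0 : 0 < W by apply: prodn_cond_gt0 => q /prime_gt0 q_gt0; rewrite expn_gt0 q_gt0.
have MW_gt0 : 0 < M`! * W by rewrite muln_gt0 fact_gt0.
have dvd_MW : \prod_(l | S l) y l %| M`! * W.
  apply/dvdn_partP => [|p]; first exact: prodn_gt0.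
  rewrite mem_primes => /and3P[p_prime _ _].
  rewrite p_part pfactor_dvdn // lognM ?fact_gt0 // logn_prod //.
  have [lt_pM | le_Mp] := ltnP p M; last first.
    rewrite big1 // => l /smooth lt_yM; apply/eqP; rewrite eqn0Ngt logn_gt0.
    by apply: contraTN lt_yM => /max_pdiv_max; rewrite -leqNgt; apply: leq_trans.
  apply: (@leq_trans (\sum_l logn p (y l))).
    by rewrite [X in _ <= X](bigID S) leq_addr.
  apply: leq_trans (sum_logn_ap_le p_prime) _; rewrite leq_add2l.
  rewrite -pfactor_dvdn // /W (bigD1 (Ordinal lt_pM)) //=; exact: dvdn_mulr.
apply: leq_trans (dvdn_leq MW_gt0 dvd_MW) _.
rewrite leq_mul2l /W -prod_nat_const; apply/orP; right.
by apply: leq_prod => q q_prime; rewrite trunc_logP ?prime_gt1.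
Qed.

End ArithmeticProgression.

(** * Chebyshev's bound *)

Lemma bin_mid_le m : 'C(m.*2.+1, m) <= 4 ^ m.
Proof.
have sym : 'C(m.*2.+1, m.+1) = 'C(m.*2.+1, m).
  by rewrite -bin_sub; [congr 'C(_, _) | ]; lia.
have two_mid : 'C(m.*2.+1, m) + 'C(m.*2.+1, m.+1) <= (1 + 1) ^ m.*2.+1.
  rewrite expnDn; under eq_bigr => i _ do rewrite !exp1n !muln1.
  have lt_m : m < m.*2.+2 by lia.
  have lt_m1 : m.+1 < m.*2.+2 by lia.
  rewrite (bigD1 (Ordinal lt_m)) // (bigD1 (Ordinal lt_m1)) /=; last first.
    by apply/eqP => [[]]; lia.
  by rewrite addnA leq_addr.
have pow_eq : (1 + 1) ^ m.*2.+1 = 2 * 4 ^ m by rewrite expnS -mul2n expnM.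
rewrite sym pow_eq in two_mid; set X := 4 ^ m in two_mid *; lia.
Qed.

(* The primes in [(m + 1, 2m + 1]] divide [(2m+1)! = 'C(2m+1, m) m! (m+1)!]
   but not [m! (m+1)!]. *)
Lemma prod_primes_dvd_bin_mid m :
  \prod_(m.+2 <= p < m.*2.+2 | prime p) p %| 'C(m.*2.+1, m).
Proof.
set Pr := \prod_(_ <= p < _ | _) p; set Q := \prod_(m.+2 <= k < m.*2.+2) k.
have fact_split : (m.*2.+1)`! = (m.+1)`! * Q by rewrite (@fact_split _ m.+1) //; lia.
have binQ : 'C(m.*2.+1, m) * m`! = Q.
  have bin_eq : 'C(m.*2.+1, m) * (m`! * (m.*2.+1 - m)`!) = (m.*2.+1)`!.
    by apply: bin_fact; lia.
  have sub_eq : m.*2.+1 - m = m.+1 by lia.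
  rewrite sub_eq fact_split in bin_eq; apply/eqP.
  by rewrite -(eqn_pmul2r (fact_gt0 m.+1)) -mulnA bin_eq mulnC.
have dvd_PrQ : Pr %| Q by rewrite /Q (bigID prime) /= dvdn_mulr.
have co_Pr_fact : coprime Pr m`!.
  rewrite /Pr big_nat_cond; elim/big_rec: _ => [|p x /andP[le_p p_prime] co_x].
    exact: coprime1n.
  rewrite coprimeMl co_x andbT prime_coprime // fact_prod Euclid_dvd_prod //.
  rewrite big_nat_cond; elim/big_rec: _ => [|i b /andP[le_i _] nb] //=.
  apply/norP; split => //; apply/negP => /(dvdn_leq _) le_pi.
  by move: le_p le_i le_pi; lia.
by rewrite -(Gauss_dvdr _ co_Pr_fact) mulnC binQ.
Qed.

(* Erdos's proof: the primes up to [2m+1] split as those up to [m+1] and those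
   dividing ['C(2m+1, m) <= 4 ^ m]. *)
Lemma primorial_le x : \prod_(0 <= p < x.+1 | prime p) p <= 4 ^ x.
Proof.
elim/ltn_ind: x => -[|[|[|x]]] IH;
  try by rewrite big_mkcond !big_nat_recr //= big_geq.
have [odd_x | even_x] := boolP (odd x).
  rewrite big_mkcond big_nat_recr //= -big_mkcond /=.
  have -> : prime x.+3 = false.
    apply/negP => /even_prime [//|]; by rewrite /= odd_x.
  by rewrite muln1 (leq_trans (IH x.+2 _)) // leq_pexp2l.
have [m def_x] : exists m, x.+3 = m.*2.+1.
  exists x.+2./2; rewrite -[in LHS](odd_double_half x.+2) /= negbK (negbTE even_x).
  by [].
rewrite def_x (big_cat_nat _ (n := m.+2)) //=; last by lia.
apply: leq_trans (_ : 4 ^ m.+1 * 4 ^ m <= _); last first.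
  by rewrite -expnD leq_pexp2l //; lia.
apply: leq_mul; first by apply: IH; lia.
apply: leq_trans (bin_mid_le m).
by apply: dvdn_leq (prod_primes_dvd_bin_mid m); rewrite bin_gt0; lia.
Qed.

Lemma prime_count_pow_le M s : s ^ (prime_count M - s.+1) <= 4 ^ M.
Proof.
case: s => [|s]; first by case: (_ - _) => [|e]; rewrite ?expn0 ?expn_gt0 ?exp0n.
rewrite /prime_count; set A := [pred q : 'I_M | prime q].
set A1 := [pred q : 'I_M | prime q && (s.+1 < q)].
have card_A : #|A| <= #|A1| + s.+2.
  rewrite -(cardID (fun q : 'I_M => s.+1 < q) A) leq_add //.
  apply: (@leq_trans #|[pred q : 'I_M | q <= s.+1]|).
    by apply: subset_leq_card; apply/subsetP => q; rewrite !inE -leqNgt => /andP[].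
  pose small := [seq val q | q <- enum [pred q : 'I_M | q <= s.+1]].
  have small_uniq : uniq small by rewrite map_inj_uniq ?enum_uniq //; exact: val_inj.
  have small_sub : {subset small <= iota 0 s.+2}.
    by move=> v /mapP[q]; rewrite mem_enum inE => le_q ->; rewrite mem_iota.
  by have := uniq_leq_size small_uniq small_sub; rewrite size_map size_iota -cardE.
apply: (@leq_trans (s.+1 ^ #|A1|)); first by rewrite leq_pexp2l //; lia.
apply: (@leq_trans (\prod_(q in A1) q)).
  by rewrite -prod_nat_const leq_prod // => q /andP[_ /ltnW].
apply: (@leq_trans (\prod_(q < M | prime q) q)).
  rewrite [X in _ <= X](bigID (fun q : 'I_M => s.+1 < q)) /= leq_pmulr //.
  by rewrite prodn_cond_gt0 // => q /andP[/prime_gt0].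
case: M {A A1 card_A} => [|M]; first by rewrite big_ord0.
rewrite -(big_mkord prime (fun q => q)) (leq_trans (primorial_le M)) //.
by rewrite leq_pexp2l.
Qed.

(** * Progressions in a product set *)

Lemma pdiv_ap_private q a c d M (l l' : 'I_M) : coprime a d -> prime q ->
  M <= q -> l' != l -> q %| a + (c + l) * d -> ~~ (q %| a + (c + l') * d).
Proof.
move=> co_ad q_prime le_Mq ne_l dvd_l; apply: contra ne_l => dvd_l'.
have co_qd := prime_dvd_ap_coprime co_ad q_prime dvd_l.
have := dvd_ap_terms_eqmod co_qd dvd_l' dvd_l.
by rewrite !modn_small ?(leq_trans _ le_Mq) // => /val_inj->.
Qed.

Lemma card_large_pdiv_ap_le (B : seq nat) g M a c d :
  (forall b, b \in B -> 0 < b) -> 0 < g -> 0 < a -> coprime a d ->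
  (forall l : 'I_M, exists b b', [/\ b \in B, b' \in B
                                   & g * (a + (c + l) * d) = b * b']) ->
  #|[pred l : 'I_M | (1 < a + (c + l) * d)
                     && (M <= max_pdiv (a + (c + l) * d))]| <= (size B).+1.
Proof.
move=> B_gt0 g_gt0 a_gt0 co_ad y_prod.
pose y (l : 'I_M) := a + (c + l) * d.
apply: (@card_private_prime_terms_le B M g y _ (fun l => max_pdiv (y l)))
  => // [l | l | l /andP[y_gt1 le_M]].
- exact: leq_trans a_gt0 (leq_addr _ _).
- have [b [b' [Bb Bb' ->]]] := y_prod l.
  rewrite -index_mem in Bb; rewrite -index_mem in Bb'.
  by exists (Ordinal Bb, Ordinal Bb'); rewrite /= !nth_index -?index_mem.
- have q_prime := max_pdiv_prime y_gt1.
  split=> // [|l' ne_l]; first exact: max_pdiv_dvd.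
  exact: pdiv_ap_private co_ad q_prime le_M ne_l (max_pdiv_dvd _).
Qed.

Lemma coprime_divn_gcd a d : 0 < d -> coprime (a %/ gcdn a d) (d %/ gcdn a d).
Proof.
move=> d_gt0; set g := gcdn a d.
have g_gt0 : 0 < g by rewrite gcdn_gt0 d_gt0 orbT.
rewrite /coprime -(eqn_pmul2r g_gt0) mul1n muln_gcdl.
by rewrite !divnK ?dvdn_gcdl ?dvdn_gcdr.
Qed.

Lemma ap_smooth_terms_bound (B : seq nat) a d N M :
  (forall b, b \in B -> 0 < b) -> 0 < d -> 0 < a -> 2 <= M -> M.*2 <= N ->
  (forall k, k < N -> exists b b', [/\ b \in B, b' \in B & a + k * d = b * b']) ->
  exists k y0, [/\ k <= (size B).+1, N - M <= y0
                 & y0 ^ (M - k) <= M`! * y0.*2 ^ prime_count M].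
Proof.
move=> B_gt0 d_gt0 a_gt0 M_gt1 le_2M_N ap_prod.
set g := gcdn a d; set a' := a %/ g; set d' := d %/ g.
have g_gt0 : 0 < g by rewrite gcdn_gt0 d_gt0 orbT.
have def_a : a = a' * g by rewrite divnK ?dvdn_gcdl.
have def_d : d = d' * g by rewrite divnK ?dvdn_gcdr.
have co_ad : coprime a' d' := coprime_divn_gcd a d_gt0.
have a'_gt0 : 0 < a' by move: a_gt0; rewrite def_a muln_gt0 => /andP[].
have d'_gt0 : 0 < d' by move: d_gt0; rewrite def_d muln_gt0 => /andP[].
set c := N - M; pose y (l : 'I_M) := a' + (c + l) * d'.
set y0 := a' + c * d'; set Y := a' + N * d'.
have y_bounds l : 0 < y l <= Y.
  rewrite /y /Y addn_gt0 a'_gt0 leq_add2l leq_mul2r /c.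
  by have := ltn_ord l; lia.
pose P := [pred l : 'I_M | (1 < y l) && (M <= max_pdiv (y l))].
have card_P : #|P| <= (size B).+1.
  apply: card_large_pdiv_ap_le g_gt0 a'_gt0 co_ad _ => // l.
  have [|b [b' [Bb Bb' prod_eq]]] := ap_prod (c + l).
    by rewrite /c; have := ltn_ord l; lia.
  by exists b, b'; split=> //; rewrite -prod_eq def_a def_d; lia.
have smooth l : ~~ P l -> max_pdiv (y l) < M.
  rewrite negb_and -!ltnNge => /orP[le_y1 | //].
  by have -> : y l = 1 by have := y_bounds l; lia.
exists #|P|, y0; split=> //; first by rewrite /y0 /c; nia.
apply: (@leq_trans (\prod_(l | ~~ P l) y l)).
  have -> : M - #|P| = #|[predC P]|.
    by rewrite -{1}(card_ord M) -(cardC P) addKn.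
  rewrite -prod_nat_const.
  by apply: leq_prod => l _; rewrite leq_add2l leq_mul2r leq_addr orbT.
apply: leq_trans (prod_smooth_ap_le co_ad y_bounds _ smooth) _; first by lia.
rewrite leq_mul2l; apply/orP; right.
case: (prime_count M) => [|e]; first by rewrite !expn0.
rewrite leq_exp2r // /Y /y0 /c -mul2n.
by move: le_2M_N; rewrite -mul2n; nia.
Qed.

Lemma ap_prodset_size_le (B : seq nat) a d N : uniq B -> 0 < d ->
  (forall k, k < N -> exists b b', [/\ b \in B, b' \in B & a + k * d = b * b']) ->
  N <= size B ^ 2.
Proof.
move=> B_uniq d_gt0 ap_prod.
pose s := [seq a + k * d | k <- iota 0 N].
have s_uniq : uniq s.
  rewrite map_inj_uniq ?iota_uniq // => k k' /eqP.
  by rewrite eqn_add2l eqn_pmul2r // => /eqP.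
have s_sub : {subset s <= [seq b * b' | b <- B, b' <- B]}.
  move=> v /mapP [k]; rewrite mem_iota add0n => /andP [_ lt_kN] ->.
  have [b [b' [Bb Bb' ->]]] := ap_prod k lt_kN.
  by apply/allpairsP; exists (b, b').
have := uniq_leq_size s_uniq s_sub.
by rewrite size_map size_iota size_allpairs expnS expn1.
Qed.

Lemma fact_le_expn M : M`! <= M ^ M.
Proof.
elim: M => // M IH; rewrite factS expnS leq_mul2l (leq_trans IH) ?orbT //.
by case: M {IH} => // M; rewrite leq_exp2r.
Qed.

Lemma In_mem (s : seq nat) x : List.In x s <-> x \in s.
Proof.
elim: s => [|y s IH] //=; rewrite in_cons; split.
- by case => [->|/IH ->]; rewrite ?eqxx ?orbT.
- by case/orP => [/eqP ->|/IH h]; [left | right].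
Qed.

Lemma NoDup_uniq (s : seq nat) : List.NoDup s -> uniq s.
Proof.
elim: s => [|y s IH] //= nodup; inversion nodup; subst.
by rewrite IH // andbT; apply/negP => /In_mem.
Qed.

Lemma expn_pow m e : m ^ e = Nat.pow m e.
Proof. by elim: e => [|e IH] //; rewrite expnS IH. Qed.

Lemma nat_ap_in_prodsetP B a d N : nat_ap_in_prodset B a d N ->
  forall k, k < N -> exists b b', [/\ b \in B, b' \in B & a + k * d = b * b'].
Proof.
move=> ap_prod k /ltP /ap_prod [b [b' [Bb [Bb' prod_eq]]]].
by exists b, b'; split=> //; apply/In_mem.
Qed.

Lemma ap_prodset_length_le (B : list nat) a d N : List.NoDup B ->
  (0 < d)%coq_nat -> nat_ap_in_prodset B a d N ->
  (N <= Nat.mul (length B) (length B))%coq_nat.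
Proof.
move=> /NoDup_uniq B_uniq /ltP d_gt0 /nat_ap_in_prodsetP ap_prod; apply/leP.
by have := ap_prodset_size_le B_uniq d_gt0 ap_prod; rewrite expnS expn1.
Qed.

Lemma ap_smooth_terms_bound_nat (B : list nat) a d N M :
  (forall b, List.In b B -> (1 <= b)%coq_nat) -> (0 < d)%coq_nat ->
  (0 < a)%coq_nat -> (2 <= M)%coq_nat -> (Nat.mul 2 M <= N)%coq_nat ->
  nat_ap_in_prodset B a d N ->
  exists k y0, (k <= S (length B))%coq_nat /\ (Nat.sub N M <= y0)%coq_nat /\
    (Nat.pow y0 (Nat.sub M k)
     <= Nat.mul (Nat.pow M M) (Nat.pow (Nat.mul 2 y0) (prime_count M)))%coq_nat.
Proof.
move=> B_gt0 /ltP d_gt0 /ltP a_gt0 /leP M_gt1 /leP le_2M_N /nat_ap_in_prodsetP ap_prod.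
have B_gt0' b : b \in B -> 0 < b by move=> /In_mem /B_gt0 /leP.
have [|k [y0 [le_k le_y0 bound]]] := ap_smooth_terms_bound B_gt0' d_gt0 a_gt0 M_gt1 _ ap_prod.
  by rewrite -mul2n -multE.
exists k, y0; split; [exact/leP | split; [exact/leP | apply/leP]].
by rewrite -!expn_pow multE mul2n (leq_trans bound) // leq_mul2r fact_le_expn orbT.
Qed.

Lemma prime_count_pow_le_nat M s :
  (Nat.pow s (Nat.sub (prime_count M) (S s)) <= Nat.pow 4 M)%coq_nat.
Proof. by apply/leP; rewrite -!expn_pow prime_count_pow_le. Qed.

End ProgressionTerms.

(** * Logarithmic estimates *)

Lemma ln_le x y : 0 < x -> x <= y -> ln x <= ln y.
Proof.
intros x_pos [lt | <-]; [left; apply ln_increasing | right]; auto.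
Qed.

Lemma ln_INR_le a b : (0 < a)%nat -> (a <= b)%nat -> ln (INR a) <= ln (INR b).
Proof. intros; apply ln_le; [apply lt_0_INR | apply le_INR]; assumption. Qed.

Lemma ln_INR_pow x e : (0 < x)%nat -> ln (INR (x ^ e)) = INR e * ln (INR x).
Proof. intros x_pos; rewrite pow_INR, ln_pow; [reflexivity | apply lt_0_INR; lia]. Qed.

Lemma ln_INR_mul x y : (0 < x)%nat -> (0 < y)%nat ->
  ln (INR (x * y)) = ln (INR x) + ln (INR y).
Proof. intros; rewrite mult_INR, ln_mult; [reflexivity | apply lt_0_INR; lia ..]. Qed.

Lemma ln_2_lt_1 : ln 2 < 1.
Proof.
rewrite <- (ln_exp 1); apply ln_increasing; [lra|].
pose proof (exp_ineq1 1); lra.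
Qed.

Lemma ln_lt_id x : 0 < x -> ln x < x.
Proof.
intros x_pos; pose proof (exp_ineq1_le (ln x)) as h; rewrite exp_ln in h; lra.
Qed.

Lemma ln_INR_ge_pow2 M e : (2 ^ e <= M)%nat -> INR e / 2 <= ln (INR M).
Proof.
intros le_M.
assert (pow_pos : (0 < 2 ^ e)%nat) by (apply Nat.neq_0_lt_0, Nat.pow_nonzero; lia).
pose proof (ln_INR_le _ _ pow_pos le_M) as h; rewrite ln_INR_pow in h by lia.
rewrite (INR_IZR_INZ 2) in h; pose proof ln_lt_2; pose proof (pos_INR e); simpl in h; nra.
Qed.

Lemma prime_count_ln_le (M pi : nat) : (16 <= M)%nat ->
  (forall s, (s ^ (pi - S s) <= 4 ^ M)%nat) -> INR pi * ln (INR M) <= 16 * INR M.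
Proof.
intros M_ge16 cheb.
destruct (Nat.sqrt_spec M ltac:(lia)) as [sq_le sq_gt]; set (s := Nat.sqrt M) in *.
assert (s_pos : (1 <= s)%nat) by nia.
set (m := ln (INR M)); set (r := INR s).
assert (r_ge1 : 1 <= r) by (apply (le_INR 1); exact s_pos).
assert (S_r : INR (S s) = r + 1) by (unfold r; rewrite S_INR; reflexivity).
assert (rr_le : r * r <= INR M) by (unfold r; rewrite <- mult_INR; apply le_INR; exact sq_le).
assert (m_lt : m < 2 * ln (r + 1)).
{ replace (2 * ln (r + 1)) with (ln (INR (S s ^ 2)))
    by (rewrite ln_INR_pow, S_r by lia; simpl; ring).
  apply ln_increasing; [apply lt_0_INR; lia | apply lt_INR; simpl; lia]. }
assert (ln_r1 : ln (r + 1) <= ln 2 + ln r).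
{ rewrite <- ln_mult by lra; apply ln_le; lra. }
assert (ln_r1_lt : ln (r + 1) < r + 1) by (apply ln_lt_id; lra).
assert (m_ge : 4 * ln 2 <= m).
{ pose proof (ln_INR_le (2 ^ 4) M ltac:(simpl; lia) M_ge16) as h.
  rewrite ln_INR_pow, (INR_IZR_INZ 2) in h by lia; simpl in h; unfold m; lra. }
assert (small_part : (r + 1) * m <= 8 * INR M) by nra.
assert (ln_r_ge : m / 4 <= ln r) by lra.
destruct (Compare_dec.le_lt_dec pi (S s)) as [le_pi | lt_pi].
- apply le_INR in le_pi; rewrite S_r in le_pi.
  assert (0 <= m) by (pose proof ln_lt_2; lra); nra.
- assert (cheb_pos : (0 < s ^ (pi - S s))%nat) by (apply Nat.neq_0_lt_0, Nat.pow_nonzero; lia).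
  pose proof (ln_INR_le _ _ cheb_pos (cheb s)) as h.
  rewrite !ln_INR_pow, minus_INR in h by lia; fold r m in h.
  replace (INR 4) with (2 * 2) in h by (simpl; lra); rewrite ln_mult in h by lra.
  apply lt_INR in lt_pi; rewrite S_r in lt_pi.
  assert ((INR pi - (r + 1)) * m <= 4 * ((INR pi - (r + 1)) * ln r)) by nra.
  pose proof ln_2_lt_1; nra.
Qed.

Lemma private_terms_ln_ge (M k pi y0 : nat) :
  (2 ^ 140 <= M)%nat -> (2 ^ 140 * M <= y0)%nat ->
  INR pi * ln (INR M) <= 16 * INR M ->
  (y0 ^ (M - k) <= M ^ M * (2 * y0) ^ pi)%nat ->
  3 * INR M <= INR k * ln (INR M).
Proof.
intros M_large y0_large pi_le smooth_le.
pose proof (ln_INR_ge_pow2 _ _ M_large) as m_ge.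
pose proof (ln_INR_ge_pow2 _ _ (le_n (2 ^ 140))) as ln_pow_ge.
rewrite INR_IZR_INZ in m_ge, ln_pow_ge; simpl Z.of_nat in m_ge, ln_pow_ge.
set (X := (2 ^ 140)%nat) in *.
assert (X_pos : (0 < X)%nat) by (apply Nat.neq_0_lt_0, Nat.pow_nonzero; lia).
assert (M_pos : (0 < M)%nat) by lia.
assert (y0_pos : (0 < y0)%nat) by nia.
set (m := ln (INR M)) in *; set (u := ln (INR y0)).
assert (m_ge70 : 70 <= m) by lra.
assert (u_ge : 70 + m <= u).
{ pose proof (ln_INR_le _ _ (Nat.mul_pos_pos _ _ X_pos M_pos) y0_large) as h.
  rewrite ln_INR_mul in h by lia; fold m u in h; lra. }
destruct (Compare_dec.le_lt_dec M k) as [le_Mk | lt_kM].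
{ apply le_INR in le_Mk; pose proof (pos_INR k); nra. }
assert (ln_le_smooth : (INR M - INR k) * u <= INR M * m + INR pi * (ln 2 + u)).
{ assert (lhs_pos : (0 < y0 ^ (M - k))%nat) by (apply Nat.neq_0_lt_0, Nat.pow_nonzero; lia).
  pose proof (ln_INR_le _ _ lhs_pos smooth_le) as h.
  rewrite ln_INR_mul, !ln_INR_pow, ln_INR_mul, minus_INR, (INR_IZR_INZ 2) in h
    by (try apply Nat.neq_0_lt_0, Nat.pow_nonzero; lia).
  simpl in h; fold m u in h; lra. }
assert (k_u : INR k * u >= INR M * (u - m) - 2 * INR pi * u).
{ assert (INR pi * ln 2 <= INR pi * u)
    by (apply Rmult_le_compat_l; [apply pos_INR | pose proof ln_2_lt_1; lra]).
  nra. }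
assert (k_u_m : INR k * u * m >= INR M * ((u - m) * m - 32 * u)) by nra.
assert (INR M * ((u - m) * m - 32 * u) >= INR M * (3 * u)).
{ apply Rmult_ge_compat_l; [apply Rle_ge, pos_INR | nra]. }
apply Rmult_le_reg_r with u; lra.
Qed.

Lemma le_n_ln_n_of_ln_bound (M n k : nat) : (2 <= n)%nat -> (k <= S n)%nat ->
  (M <= n * n)%nat -> 3 * INR M <= INR k * ln (INR M) ->
  INR M <= INR n * ln (INR n).
Proof.
intros n_ge2 k_le M_le k_ge.
assert (n_r : 2 <= INR n) by (apply (le_INR 2); exact n_ge2).
assert (ln_n_pos : 0 < ln (INR n)) by (rewrite <- ln_1; apply ln_increasing; lra).
destruct (Nat.eq_0_gt_0_cases M) as [-> | M_pos]; [simpl; nra|].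
assert (m_le : ln (INR M) <= 2 * ln (INR n)).
{ replace (2 * ln (INR n)) with (ln (INR (n * n))) by (rewrite ln_INR_mul by lia; ring).
  apply ln_INR_le; lia. }
assert (k_r : INR k <= INR n + 1) by (rewrite <- S_INR; apply le_INR; exact k_le).
assert (INR k * ln (INR M) <= (INR n + 1) * (2 * ln (INR n))).
{ apply Rmult_le_compat; [apply pos_INR | | exact k_r | exact m_le].
  replace 0 with (ln (INR 1)) by (simpl; apply ln_1); apply ln_INR_le; lia. }
nra.
Qed.

Lemma large_ap_length_le (L : nat) (B : list nat) (n N a d : nat) :
  (2 ^ 141 <= L)%nat -> NoDup B -> length B = n -> (2 <= n)%nat ->
  (forall b, In b B -> (1 <= b)%nat) -> (0 < d)%nat -> (L * L <= N)%nat ->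
  nat_ap_in_prodset B a d N -> INR N <= 2 * INR L * INR n * ln (INR n).
Proof.
intros L_large B_nodup B_len n_ge2 B_pos d_pos N_large ap_prod.
assert (L_ge16 : (16 <= L)%nat).
{ apply Nat.le_trans with (2 ^ 141)%nat; [|exact L_large].
  apply (Nat.pow_le_mono_r 2 4 141); lia. }
assert (pow_141 : (2 ^ 141 = 2 * 2 ^ 140)%nat) by (rewrite Nat.pow_succ_r'; reflexivity).
set (X := (2 ^ 140)%nat) in *.
assert (X_pos : (0 < X)%nat) by (apply Nat.neq_0_lt_0, Nat.pow_nonzero; lia).
assert (a_pos : (0 < a)%nat).
{ destruct (ap_prod 0%nat ltac:(nia)) as [b [b' [Bb [Bb' prod_eq]]]].
  pose proof (B_pos _ Bb); pose proof (B_pos _ Bb'); nia. }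
set (M := (N / L)%nat).
pose proof (Nat.div_mod N L ltac:(lia)) as N_div; pose proof (Nat.mod_upper_bound N L ltac:(lia)).
fold M in N_div.
assert (M_large : (L <= M)%nat) by (apply Nat.div_le_lower_bound; lia).
clearbody M.
pose proof (ProgressionTerms.ap_prodset_length_le B_nodup d_pos ap_prod) as N_le.
assert (M_ge2 : (2 <= M)%nat) by lia.
assert (le_2M_N : (2 * M <= N)%nat).
{ enough (2 * M <= L * M)%nat by lia. apply Nat.mul_le_mono_r; lia. }
destruct (ProgressionTerms.ap_smooth_terms_bound_nat B_pos d_pos a_pos M_ge2 le_2M_N ap_prod)
  as [k [y0 [k_le [y0_ge smooth_le]]]].
rewrite B_len in N_le, k_le.
assert (pi_le := prime_count_ln_le M _ ltac:(lia)
  (ProgressionTerms.prime_count_pow_le_nat M)).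
assert (XM_le : (X * M <= y0)%nat).
{ enough ((X + 1) * M <= L * M)%nat by nia. apply Nat.mul_le_mono_r; lia. }
assert (k_ge := private_terms_ln_ge M k _ y0 ltac:(lia) XM_le pi_le smooth_le).
assert (M_le := le_n_ln_n_of_ln_bound M n k n_ge2 k_le ltac:(nia) k_ge).
assert (N_le_LM : (N <= 2 * L * M)%nat) by nia.
apply le_INR in N_le_LM; rewrite !mult_INR in N_le_LM.
pose proof (pos_INR L); simpl in N_le_LM; nra.
Qed.

(* A decreasing progression is read backwards; the first term is a product of
   two naturals, hence nonnegative. *)
Lemma ap_in_prodset_nat (B : list nat) (N : nat) (a d : Z) :
  d <> 0%Z -> (0 < N)%nat ->
  (forall k : nat, (k < N)%nat -> in_prodset B (a + Z.of_nat k * d)%Z) ->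
  exists a' d' : nat, (0 < d')%nat /\ nat_ap_in_prodset B a' d' N.
Proof.
intros d_nz N_pos ap_prod.
destruct (Z.lt_total d 0) as [d_neg | [d_zero | d_pos]]; [| lia |].
- destruct (ap_prod (N - 1)%nat ltac:(lia)) as [c [c' [_ [_ last_eq]]]].
  exists (Z.to_nat (a + Z.of_nat (N - 1) * d)), (Z.to_nat (- d)); split; [lia|].
  intros k lt_kN; destruct (ap_prod (N - 1 - k)%nat ltac:(lia)) as [b [b' [Bb [Bb' prod_eq]]]].
  exists b, b'; split; [exact Bb | split; [exact Bb'|]].
  apply Nat2Z.inj; rewrite <- prod_eq, Nat2Z.inj_add, Nat2Z.inj_mul, !Z2Nat.id by lia.
  rewrite !Nat2Z.inj_sub by lia; simpl; ring.
- destruct (ap_prod 0%nat N_pos) as [c [c' [_ [_ first_eq]]]].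
  exists (Z.to_nat a), (Z.to_nat d); split; [lia|].
  intros k lt_kN; destruct (ap_prod k lt_kN) as [b [b' [Bb [Bb' prod_eq]]]].
  exists b, b'; split; [exact Bb | split; [exact Bb'|]].
  apply Nat2Z.inj; rewrite <- prod_eq, Nat2Z.inj_add, Nat2Z.inj_mul, !Z2Nat.id by lia.
  ring.
Qed.

Theorem theorem1 :
  exists C : R, C > 0 /\
  forall (B : list nat) (n N : nat) (a d : Z),
    NoDup B -> length B = n -> (2 <= n)%nat ->
    (forall b, In b B -> (1 <= b)%nat) ->
    d <> 0%Z ->
    (forall k : nat, (k < N)%nat -> in_prodset B (a + Z.of_nat k * d)%Z) ->
    INR N <= C * INR n * ln (INR n).
Proof.
set (L := (2 ^ 141)%nat).
assert (L_large : (2 ^ 141 <= L)%nat) by apply le_n.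
assert (L_ge2 : (2 <= L)%nat) by (apply (Nat.pow_le_mono_r 2 1 141); lia).
clearbody L.
exists (INR (L * L)); split; [apply Rlt_gt, lt_0_INR; nia|].
intros B n N a d B_nodup B_len n_ge2 B_pos d_nz ap_prod.
assert (n_r : 2 <= INR n) by (apply (le_INR 2); exact n_ge2).
assert (n_ln_n : 1 <= INR n * ln (INR n)).
{ assert (ln 2 <= ln (INR n)) by (apply ln_le; lra). pose proof ln_lt_2; nra. }
assert (C_ge : 2 * INR L <= INR (L * L)).
{ apply le_INR in L_ge2; rewrite mult_INR; simpl in L_ge2; nra. }
pose proof (pos_INR (L * L)).
destruct (Compare_dec.le_lt_dec (L * L) N) as [N_large | N_small].
- destruct (ap_in_prodset_nat B N a d d_nz ltac:(nia) ap_prod) as [a' [d' [d'_pos ap_prod']]].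
  pose proof (large_ap_length_le L B n N a' d' L_large B_nodup B_len n_ge2 B_pos d'_pos
    N_large ap_prod').
  nra.
- apply lt_INR in N_small; nra.
Qed.
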